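(* For every fixed integer $s \ge 2$, the $s$-Club problem is solvable in polynomial time on graphs whose maximum independent set has size at most two.
   Context: The $s$-Club problem: given an undirected simple graph $G=(V,E)$ and $\ell\in\mathbb{N}$, decide whether there is a vertex set $S\subseteq V$ with $|S|\ge \ell$ such that the induced subgraph $G[S]$ has diameter at most $s$ (such an $S$ is called an $s$-club). 2-Club is the case $s=2$. *)

From mathcomp Require Import all_boot.
Set Implicit Arguments.
Unset Strict Implicit.
Unset Printing Implicit Defensive.

(* Graphs: a simple undirected graph on vertex set 'I_n is a symmetric,    *)
(* irreflexive relation e : rel 'I_n.                                      *)

Definition dist_le_in (n : nat) (e : rel 'I_n) (S : {set 'I_n})
    (s : nat) (u v : 'I_n) : Prop :=
  exists p : seq 'I_n,
    [/\ all (fun x => x \in S) p, path e u p, last u p = v & size p <= s].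

Definition is_sclub (n : nat) (e : rel 'I_n) (s : nat) (S : {set 'I_n}) : Prop :=
  forall u v, u \in S -> v \in S -> dist_le_in e S s u v.

Definition sclub_yes (n : nat) (e : rel 'I_n) (s l : nat) : Prop :=
  exists S : {set 'I_n}, l <= #|S| /\ is_sclub e s S.

Definition independent (n : nat) (e : rel 'I_n) (I : {set 'I_n}) : Prop :=
  forall u v, u \in I -> v \in I -> ~~ e u v.

Definition indep_number_le2 (n : nat) (e : rel 'I_n) : Prop :=
  forall I : {set 'I_n}, independent e I -> #|I| <= 2.

(* Machine model: unit-cost RAM with registers indexed by nat, addition,   *)
(* truncated subtraction, indirect addressing, conditional jump.           *)

Inductive instr : Type :=
| IConst of nat & nat
| IAdd of nat & nat & nat
| ISub of nat & nat & nat
| ILoad of nat & nat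
| IStore of nat & nat
| IJz of nat & nat
| IHalt.

Definition program := seq instr.
Definition memory := nat -> nat.

Definition upd (m : memory) (r v : nat) : memory :=
  fun x => if x == r then v else m x.

Definition step (P : program) (st : nat * memory) : option (nat * memory) :=
  let: (pc, m) := st in
  if pc < size P then
    match nth IHalt P pc with
    | IConst r k => Some (pc.+1, upd m r k)
    | IAdd r a b => Some (pc.+1, upd m r (m a + m b))
    | ISub r a b => Some (pc.+1, upd m r (m a - m b))
    | ILoad r a => Some (pc.+1, upd m r (m (m a)))
    | IStore a r => Some (pc.+1, upd m (m a) (m r))
    | IJz r t => Some (if m r == 0 then t else pc.+1, m)
    | IHalt => None
    end
  else None.

Fixpoint run (P : program) (t : nat) (st : nat * memory) : option memory :=
  match step P st with
  | None => Some st.2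
  | Some st' => if t is t'.+1 then run P t' st' else None
  end.

(* input encoding: M[0] = n, M[1] = l, M[2 + i*n + j] = [ij is an edge] *)
Definition edge_nat (n : nat) (e : rel 'I_n) (i j : nat) : bool :=
  match @insub nat (fun k => k < n) 'I_n i, @insub nat (fun k => k < n) 'I_n j with
  | Some x, Some y => e x y
  | _, _ => false
  end.

Definition init_mem (n : nat) (e : rel 'I_n) (l : nat) : memory :=
  fun a =>
    if a == 0 then n
    else if a == 1 then l
    else if a < 2 + n * n then nat_of_bool (edge_nat e ((a - 2) %/ n) ((a - 2) %% n))
    else 0.

(* length of the encoding: n^2 adjacency bits plus the binary length of l *)
Definition input_size (n l : nat) : nat := n * n + (trunc_log 2 l).+1.

Definition decides_within (P : program) (t : nat) (init : memory) (yes : Prop) : Prop :=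
  exists m', run P t (0, init) = Some m' /\ (m' 0 != 0 <-> yes).

From mathcomp Require Import all_boot.
From mathcomp Require Import zify.
Set Implicit Arguments.
Unset Strict Implicit.
Unset Printing Implicit Defensive.

Section Walks.
Variables (n : nat) (e : rel 'I_n) (S : {set 'I_n}) (s : nat).

Lemma dist_le_in_refl u : dist_le_in e S s u u.
Proof. by exists [::]. Qed.

Lemma dist_le_in_edge u v : 0 < s -> e u v -> v \in S -> dist_le_in e S s u v.
Proof. by move=> s_gt0 euv vS; exists [:: v]; rewrite /= euv vS. Qed.

Lemma dist_le_in_path2 u a v : 1 < s -> e u a -> e a v -> a \in S -> v \in S ->
  dist_le_in e S s u v.
Proof. by move=> s_gt1 eua eav aS vS; exists [:: a; v]; rewrite /= eua eav aS vS. Qed.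

Lemma dist_le_in_path3 u a b v : 2 < s -> e u a -> e a b -> e b v ->
  a \in S -> b \in S -> v \in S -> dist_le_in e S s u v.
Proof.
by move=> s_gt2 eua eab ebv aS bS vS; exists [:: a; b; v]; rewrite /= eua eab ebv aS bS vS.
Qed.

End Walks.

Lemma dist_le_in2P n (e : rel 'I_n) (S : {set 'I_n}) u v : dist_le_in e S 2 u v ->
  [\/ u = v, e u v | exists2 a, a \in S & e u a && e a v].
Proof.
case=> [[|x [|y [|z p]]]] [/= Sp up <- size_p] //; first by apply: Or31.
- by apply: Or32; move: up; rewrite andbT.
- by apply: Or33; exists x; [case/and3P: Sp | case/and3P: up => -> ->].
Qed.

Definition far n (r : rel 'I_n) (x : 'I_n) := [exists y, ~~ r x y].

Definition ball n (r : rel 'I_n) (x : 'I_n) := [set y | r x y].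

(* Size of a largest club when [r x] describes the club around a far vertex [x]. *)
Definition max_ball n (r : rel 'I_n) :=
  if [exists x, far r x] then \max_(x | far r x) #|ball r x| else n.

Lemma sclub_yes_max_ball n (e : rel 'I_n) (r : rel 'I_n) s l :
  (forall x, far r x -> is_sclub e s (ball r x)) ->
  (forall S, is_sclub e s S -> [exists x, far r x] ->
     exists2 x, far r x & #|S| <= #|ball r x|) ->
  (~~ [exists x, far r x] -> is_sclub e s [set: 'I_n]) ->
  sclub_yes e s l <-> l <= max_ball r.
Proof.
move=> ball_club club_in_ball all_club; rewrite /max_ball.
split=> [[S [lS clubS]]|].
  apply: leq_trans lS _; case: ifP => [/(club_in_ball S clubS) [x farx le_S]|_].
    exact: leq_trans le_S (leq_bigmax_cond _ farx).
  by have := max_card S; rewrite card_ord.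
case: ifPn => [ex_far|no_far] l_le.
  case/existsP: ex_far => x0 farx0; rewrite (bigmax_eq_arg _ farx0) in l_le.
  case: arg_maxnP l_le => // x farx _ lx.
  by exists (ball r x); split; last exact: ball_club.
by exists [set: 'I_n]; rewrite cardsT card_ord; split; last exact: all_club.
Qed.

Definition near n (e : rel 'I_n) (x y : 'I_n) := (x == y) || e x y.

Definition within2 n (e : rel 'I_n) (x y : 'I_n) := [exists a, near e x a && near e a y].

Definition within3 n (e : rel 'I_n) (x y : 'I_n) := [exists a, within2 e x a && near e a y].

Lemma within2E n (e : rel 'I_n) x y :
  within2 e x y = [|| x == y, e x y | [exists a, e x a && e a y]].
Proof.
apply/existsP/or3P => [[a /andP[/orP[/eqP<- | xa] /orP[/eqP<- | ay]]] | ].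
- by apply: Or31.
- by apply: Or32.
- by apply: Or32.
- by apply/Or33/existsP; exists a; rewrite xa.
case=> [/eqP<- | xy | /existsP[a /andP[xa ay]]].
- by exists x; rewrite /near eqxx.
- by exists y; rewrite /near xy eqxx orbT.
- by exists a; rewrite /near xa ay !orbT.
Qed.

Section IndependenceNumberTwo.
Variables (n : nat) (e : rel 'I_n).
Hypotheses (e_sym : symmetric e) (e_irr : irreflexive e) (alpha2 : indep_number_le2 e).

Lemma no_indep3 x y z : x != y -> x != z -> y != z ->
  ~~ e x y -> ~~ e x z -> ~~ e y z -> False.
Proof.
move=> nxy nxz nyz exy exz eyz.
have indep : independent e [set x; y; z].
  by move=> u v; rewrite !inE -!orbA => /or3P[] /eqP-> /or3P[] /eqP->;
    rewrite ?e_irr // e_sym.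
have := alpha2 indep.
rewrite (_ : [set x; y; z] = z |: [set x; y]); last first.
  by apply/setP => w; rewrite !inE orbC orbA.
by rewrite cardsU1 !inE negb_or !(eq_sym z) nxz nyz cards2 nxy.
Qed.

Lemma nearC : symmetric (near e).
Proof. by move=> x y; rewrite /near eq_sym e_sym. Qed.

Lemma within2C : symmetric (within2 e).
Proof.
suff sub x y : within2 e x y -> within2 e y x by move=> x y; apply/idP/idP; apply: sub.
by case/existsP=> a /andP[xa ay]; apply/existsP; exists a; rewrite nearC ay nearC xa.
Qed.

Lemma within2Pn p q : ~~ within2 e p q ->
  [/\ p != q, ~~ e p q & forall a, e p a -> ~~ e a q].
Proof.
rewrite within2E !negb_or => /and3P[-> -> /existsPn nopath]; split=> // a pa.
by have := nopath a; rewrite pa.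
Qed.

Lemma near_cover p q w : ~~ within2 e p q ->
  near e p w || near e q w.
Proof.
move=> pq_far.
have [npq epq _] := within2Pn pq_far.
apply/negPn/negP; rewrite /near !negb_or => /andP[/andP[nwp epw] /andP[nwq eqw]].
exact: no_indep3 npq nwp nwq epq epw eqw.
Qed.

Lemma near_clique p q x y : ~~ within2 e p q ->
  near e p x -> near e p y -> x != y -> e x y.
Proof.
move=> pq_far.
have [npq epq nopath] := within2Pn pq_far.
rewrite /near => /orP[/eqP<- | px] /orP[/eqP<- | py] nxy //.
- by rewrite eqxx in nxy.
- by rewrite e_sym.
apply/negPn/negP => exy.
have nxq : x != q by apply: contraNneq epq => <-.
have nyq : y != q by apply: contraNneq epq => <-.
exact: no_indep3 nxy nxq nyq exy (nopath x px) (nopath y py).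
Qed.

Section FarPair.
Variables p q : 'I_n.
Hypothesis pq_far : ~~ within2 e p q.

(* Every vertex of the ball outside [N[p]] is adjacent to all of [N[q]]... *)
Lemma ball_within2_dist2 a b : a \in ball (within2 e) p -> b \in ball (within2 e) p ->
  ~~ near e p b -> dist_le_in e (ball (within2 e) p) 2 a b.
Proof.
move=> aB bB pb.
have [c pc cb] : exists2 c, e p c & e c b.
  move: bB pb; rewrite inE within2E /near.
  case/or3P=> [/eqP-> | -> | /existsP[c /andP[pc cb]] _]; rewrite ?eqxx ?orbT //.
  by exists c.
have cB : c \in ball (within2 e) p by rewrite inE within2E pc orbT.
have pc' : near e p c by rewrite /near pc orbT.
case pa: (near e p a).
  case/orP: pa => [/eqP<- | pa]; first exact: dist_le_in_path2 pc cb cB bB.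
  have [-> | nac] := eqVneq a c; first exact: dist_le_in_edge.
  apply: dist_le_in_path2 cb cB bB => //.
  by apply: (near_clique pq_far _ pc' nac); rewrite /near pa orbT.
have [-> | nab] := eqVneq a b; first exact: dist_le_in_refl.
apply: dist_le_in_edge bB => //.
apply: (near_clique (p := q) (q := p)) nab; first by rewrite within2C.
- by have := near_cover a pq_far; rewrite pa.
- by have := near_cover b pq_far; rewrite (negbTE pb).
Qed.

Lemma ball_within2_club : is_sclub e 2 (ball (within2 e) p).
Proof.
move=> a b aB bB.
case pb: (near e p b); last exact: ball_within2_dist2 aB bB (negbT pb).
case pa: (near e p a).
  have [-> | nab] := eqVneq a b; first exact: dist_le_in_refl.
  exact: dist_le_in_edge (near_clique pq_far pa pb nab) bB.
have := ball_within2_dist2 bB aB (negbT pa).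
case/dist_le_in2P=> [-> | ba | [c cB /andP[bc ca]]]; first exact: dist_le_in_refl.
  by apply: dist_le_in_edge; rewrite // e_sym.
by apply: dist_le_in_path2 cB bB; rewrite // e_sym.
Qed.

(* A 2-club either stays within distance one of [N[p]], or contains a vertex [y0]
   at distance two from [N[p]]; in the latter case it lies in the ball of [q]. *)
Lemma club2_in_far_ball S : is_sclub e 2 S ->
  (#|S| <= #|ball (within2 e) p|) || (#|S| <= #|ball (within2 e) q|).
Proof.
move=> clubS; have [npq epq nopath] := within2Pn pq_far.
have [nearS | ] := boolP [forall y in S,
  near e p y || [exists x in S, near e p x && e x y]].
  apply/orP; left; apply: subset_leq_card; apply/subsetP => y yS; rewrite inE.
  case/orP: (forall_inP nearS y yS) => [py | /exists_inP[x xS /andP[px xy]]].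
  - by apply/existsP; exists y; rewrite py /near eqxx.
  - by apply/existsP; exists x; rewrite px /near xy orbT.
rewrite negb_forall_in => /exists_inP[y0 y0S]; rewrite negb_or => /andP[py0 nopath0].
apply/orP; right; apply: subset_leq_card; apply/subsetP => z zS; rewrite inE.
case qz: (near e q z).
  by apply/existsP; exists z; rewrite qz /near eqxx.
have pz : near e p z by have := near_cover z pq_far; rewrite qz orbF.
have nzy : z != y0 by apply: contraNneq py0 => <-.
have ezy : ~~ e z y0 by apply: contra nopath0 => zy; apply/exists_inP; exists z; rewrite ?pz.
case/dist_le_in2P: (clubS z y0 zS y0S) => [zy | zy | [w wS /andP[zw wy]]].
- by rewrite zy eqxx in nzy.
- by rewrite zy in ezy.
have pw : ~~ near e p w.
  by apply: contra nopath0 => pw; apply/exists_inP; exists w; rewrite ?pw.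
have := near_cover w pq_far; rewrite (negbTE pw) /= /near => /orP[/eqP wq | qw].
  by move: qz; rewrite wq nearC /near zw orbT.
by apply/existsP; exists w; rewrite /near qw e_sym zw !orbT.
Qed.

End FarPair.

Lemma club2_in_ball S : is_sclub e 2 S -> [exists x, far (within2 e) x] ->
  exists2 x, far (within2 e) x & #|S| <= #|ball (within2 e) x|.
Proof.
move=> clubS /existsP[p /existsP[q pq]].
have qp : ~~ within2 e q p by rewrite within2C.
case/orP: (club2_in_far_ball pq clubS) => le_S.
  by exists p => //; apply/existsP; exists q.
by exists q => //; apply/existsP; exists p.
Qed.

Lemma all_within2_club : ~~ [exists x, far (within2 e) x] -> is_sclub e 2 [set: 'I_n].
Proof.
move=> /existsPn nofar a b _ _.
have /existsPn/(_ b)/negPn := nofar a.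
rewrite within2E; case/or3P=> [/eqP-> | ab | /existsP[c /andP[ac cb]]]; first exact: dist_le_in_refl.
  by apply: dist_le_in_edge; rewrite ?inE.
by apply: dist_le_in_path2 ac cb _ _; rewrite ?inE.
Qed.

Lemma sclub2_yesE l : sclub_yes e 2 l <-> l <= max_ball (within2 e).
Proof.
apply: sclub_yes_max_ball; [|exact: club2_in_ball|exact: all_within2_club].
by move=> p /existsP[q pq]; apply: ball_within2_club pq.
Qed.

Lemma within2_refl : reflexive (within2 e).
Proof. by move=> x; apply/existsP; exists x; rewrite /near eqxx. Qed.

Lemma within3_refl : reflexive (within3 e).
Proof. by move=> x; apply/existsP; exists x; rewrite within2_refl /near eqxx. Qed.

Lemma within2_within3 x y : within2 e x y -> within3 e x y.
Proof. by move=> xy; apply/existsP; exists y; rewrite xy /near eqxx. Qed.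

(* Under independence number two, a walk leaving the 3-ball would create an
   independent triple; so the 3-ball is closed under adjacency. *)
Lemma within3_edge x w z : within3 e x w -> e w z -> within3 e x z.
Proof.
move=> xw wz.
case xw2: (within2 e x w); first by apply/existsP; exists w; rewrite xw2 /near wz orbT.
case/existsP: xw => a /andP[xa /orP[/eqP aw | aw]]; first by rewrite -aw xa in xw2.
case xz: (within2 e x z); first by apply/existsP; exists z; rewrite xz /near eqxx.
case az: (e a z); first by apply/existsP; exists a; rewrite xa /near az orbT.
exfalso; have [nxz exz _] := within2Pn (negbT xz).
have nxa : x != a by apply: contraFneq xw2 => ->; rewrite within2E aw orbT.
have exa : ~~ e x a.
  by apply: contraFN xw2 => ex; apply/existsP; exists a; rewrite /near ex aw !orbT.
have naz : a != z by apply: contraFneq xz => <-.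
exact: no_indep3 nxa nxz naz exa exz (negbT az).
Qed.

Lemma within3_near x w z : within3 e x w -> near e w z -> within3 e x z.
Proof. by move=> xw /orP[/eqP<- // | wz]; apply: within3_edge xw wz. Qed.

Lemma within3_path x p w : within3 e x w -> path e w p -> within3 e x (last w p).
Proof.
elim: p w => //= y p IHp w xw /andP[wy yp].
exact: IHp (within3_edge xw wy) yp.
Qed.

Lemma within3_trans : transitive (within3 e).
Proof.
move=> u a b au /existsP[c /andP[/existsP[d /andP[ud dc]] cb]].
exact: within3_near (within3_near (within3_near au ud) dc) cb.
Qed.

Lemma within3C : symmetric (within3 e).
Proof.
suff sub x y : within3 e x y -> within3 e y x by move=> x y; apply/idP/idP; apply: sub.
case/existsP=> c /andP[xc cy].
apply: within3_trans (within3_near (within3_refl y) _) _; first by rewrite nearC; apply: cy.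
by apply: within2_within3; rewrite within2C.
Qed.

Lemma ball_within3_club x s : 2 < s -> is_sclub e s (ball (within3 e) x).
Proof.
move=> s_gt2 a b; rewrite !inE => xa xb.
have xB y : within3 e x y -> y \in ball (within3 e) x by rewrite inE.
have /existsP[c /andP[ac cb]] := within3_trans (etrans (within3C a x) xa) xb.
rewrite within2E in ac; case/or3P: ac => [/eqP ac | ac | /existsP[d /andP[ad dc]]].
- rewrite -ac in cb; case/orP: cb => [/eqP <- | ab]; first exact: dist_le_in_refl.
  by apply: dist_le_in_edge ab (xB _ xb); lia.
- have xc := within3_edge xa ac.
  case/orP: cb => [/eqP <- | cb]; first by apply: dist_le_in_edge ac (xB _ xc); lia.
  by apply: dist_le_in_path2 ac cb (xB _ xc) (xB _ xb); lia.
- have xd := within3_edge xa ad; have xc := within3_edge xd dc.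
  case/orP: cb => [/eqP <- | cb].
    by apply: dist_le_in_path2 ad dc (xB _ xd) (xB _ xc); lia.
  by apply: dist_le_in_path3 ad dc cb (xB _ xd) (xB _ xc) (xB _ xb); lia.
Qed.

Lemma club_in_ball_within3 s S u : is_sclub e s S -> u \in S -> S \subset ball (within3 e) u.
Proof.
move=> clubS uS; apply/subsetP => v vS; rewrite inE.
have [p [_ up <- _]] := clubS u v uS vS.
exact: within3_path (within3_refl u) up.
Qed.

Lemma far_within3 x y : far (within3 e) y -> far (within3 e) x.
Proof.
case/existsP=> z yz; apply/existsP.
case xy: (within3 e x y); last by exists y; rewrite xy.
by exists z; apply: contra yz; apply: within3_trans; rewrite within3C.
Qed.

Lemma sclub3_yesE s l : 2 < s -> sclub_yes e s l <-> l <= max_ball (within3 e).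
Proof.
move=> s_gt2; apply: sclub_yes_max_ball => [x _ | S clubS /existsP[y fary] | nofar].
- exact: ball_within3_club.
- have [-> | [u uS]] := set_0Vmem S.
    by exists y; rewrite ?cards0.
  exists u; first exact: far_within3 fary.
  exact/subset_leq_card/(club_in_ball_within3 clubS uS).
- move=> u v _ _; have Bu : ball (within3 e) u = [set: 'I_n].
    by apply/setP => w; move/existsPn/(_ u)/existsPn/(_ w): nofar; rewrite !inE => /negPn.
  by have := ball_within3_club (x := u) s_gt2; rewrite Bu; apply; rewrite inE.
Qed.

End IndependenceNumberTwo.

Inductive cmd : Type :=
| CSkip
| CInstr of instr
| CSeq of cmd & cmd
| CWhile of nat & cmd
| CIf of nat & cmd & cmd.

Fixpoint csize (c : cmd) : nat :=
  match c with
  | CSkip => 0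
  | CInstr _ => 1
  | CSeq c1 c2 => csize c1 + csize c2
  | CWhile _ b => (csize b).+2
  | CIf _ c1 c2 => (csize c1 + csize c2).+2
  end.

(* [compile Z o c] is the code of [c] placed at address [o]; unconditional jumps
   are [IJz Z _], so register [Z] must hold [0] and never be written. *)
Fixpoint compile (Z o : nat) (c : cmd) : program :=
  match c with
  | CSkip => [::]
  | CInstr i => [:: i]
  | CSeq c1 c2 => compile Z o c1 ++ compile Z (o + csize c1) c2
  | CWhile r b => IJz r (o + csize b).+2 :: compile Z o.+1 b ++ [:: IJz Z o]
  | CIf r c1 c2 => IJz r (o + csize c1).+2 :: compile Z o.+1 c1 ++
                   IJz Z (o + csize c1 + csize c2).+2 :: compile Z (o + csize c1).+2 c2
  end.

Lemma size_compile Z o c : size (compile Z o c) = csize c.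
Proof.
elim: c o => //= [c1 IH1 c2 IH2 | r b IH | r c1 IH1 c2 IH2] o.
- by rewrite size_cat IH1 IH2.
- by rewrite size_cat IH addn1.
- by rewrite size_cat /= IH1 IH2 addnS.
Qed.

Definition writes_instr (i : instr) : seq nat :=
  match i with
  | IConst r _ | IAdd r _ _ | ISub r _ _ | ILoad r _ => [:: r]
  | _ => [::]
  end.

Fixpoint writes (c : cmd) : seq nat :=
  match c with
  | CSkip => [::]
  | CInstr i => writes_instr i
  | CSeq c1 c2 | CIf _ c1 c2 => writes c1 ++ writes c2
  | CWhile _ b => writes b
  end.

(* Straight-line instructions with a statically known written register. *)
Definition basic (i : instr) : bool :=
  match i with
  | IConst _ _ | IAdd _ _ _ | ISub _ _ _ | ILoad _ _ => true
  | _ => false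
  end.

Definition exec_instr (i : instr) (m : memory) : memory :=
  match i with
  | IConst r k => upd m r k
  | IAdd r a b => upd m r (m a + m b)
  | ISub r a b => upd m r (m a - m b)
  | ILoad r a => upd m r (m (m a))
  | _ => m
  end.

Inductive exec : cmd -> memory -> memory -> nat -> Prop :=
| exec_skip m : exec CSkip m m 0
| exec_instr_basic i m : basic i -> exec (CInstr i) m (exec_instr i m) 1
| exec_seq c1 c2 m m1 m2 k1 k2 :
    exec c1 m m1 k1 -> exec c2 m1 m2 k2 -> exec (CSeq c1 c2) m m2 (k1 + k2)
| exec_while_false r b m : m r = 0 -> exec (CWhile r b) m m 1
| exec_while_true r b m m1 m2 k1 k2 : m r != 0 -> exec b m m1 k1 ->
    exec (CWhile r b) m1 m2 k2 -> exec (CWhile r b) m m2 (k1 + k2).+2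
| exec_if_true r c1 c2 m m1 k : m r != 0 -> exec c1 m m1 k -> exec (CIf r c1 c2) m m1 k.+2
| exec_if_false r c1 c2 m m1 k : m r = 0 -> exec c2 m m1 k -> exec (CIf r c1 c2) m m1 k.+1.

Definition unchanged (P : pred nat) (m m' : memory) := forall x, P x -> m' x = m x.

Lemma unchanged_trans P m1 m2 m3 : unchanged P m1 m2 -> unchanged P m2 m3 -> unchanged P m1 m3.
Proof. by move=> u12 u23 x Px; rewrite u23 // u12. Qed.

Lemma unchanged_sub (P Q : pred nat) m m' :
  (forall x, P x -> Q x) -> unchanged Q m m' -> unchanged P m m'.
Proof. by move=> PQ u x /PQ; apply: u. Qed.

Definition frame (W : seq nat) := unchanged (fun x => x \notin W).

Lemma frame_cat W1 W2 m m1 m2 : frame W1 m m1 -> frame W2 m1 m2 -> frame (W1 ++ W2) m m2.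
Proof.
by move=> f1 f2 x; rewrite mem_cat negb_or => /andP[x1 x2]; rewrite f2 // f1.
Qed.

Lemma frame_catl W1 W2 m m' : frame W1 m m' -> frame (W1 ++ W2) m m'.
Proof. by move=> f x; rewrite mem_cat negb_or => /andP[/f]. Qed.

Lemma frame_catr W1 W2 m m' : frame W2 m m' -> frame (W1 ++ W2) m m'.
Proof. by move=> f x; rewrite mem_cat negb_or => /andP[_ /f]. Qed.

Lemma exec_frame c m m' k : exec c m m' k -> frame (writes c) m m'.
Proof.
elim=> {c m m' k} //= [i m _ x | c1 c2 m m1 m2 k1 k2 _ f1 _ f2 | r b m m1 m2 k1 k2 _ _ f1 _ f2
  | r c1 c2 m m1 k _ _ f | r c1 c2 m m1 k _ _ f].
- by case: i => //= [r k | r a b | r a b | r a]; rewrite inE /upd => /negbTE->.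
- exact: frame_cat f1 f2.
- by move=> x xW; rewrite f2 // f1.
- exact: frame_catl.
- exact: frame_catr.
Qed.

Fixpoint steps (P : program) (k : nat) (st : nat * memory) : option (nat * memory) :=
  if k is k'.+1 then (if step P st is Some st' then steps P k' st' else None) else Some st.

Lemma stepsS P k st :
  steps P k.+1 st = if step P st is Some st' then steps P k st' else None.
Proof. by []. Qed.

Lemma steps_step P k st st' : step P st = Some st' -> steps P k.+1 st = steps P k st'.
Proof. by rewrite stepsS => ->. Qed.

Lemma steps_add P a b st :
  steps P (a + b) st = if steps P a st is Some st' then steps P b st' else None.
Proof. by elim: a st => //= a IH st; case: (step P st). Qed.

Lemma run_of_steps P k t st st' : steps P k st = Some st' -> step P st' = None -> k <= t ->
  run P t st = Some st'.2.
Proof.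
elim: k t st => [|k IH] [|t] st //=.
- by case=> <- ->.
- by case=> <- ->.
- by case: (step P st) => // st1 /IH; apply.
Qed.

Definition code_at (P : program) (o : nat) (l : seq instr) :=
  exists pre post, P = pre ++ l ++ post /\ size pre = o.

Lemma code_at_catl P o l1 l2 : code_at P o (l1 ++ l2) -> code_at P o l1.
Proof. by case=> pre [post [-> <-]]; exists pre, (l2 ++ post); rewrite -catA. Qed.

Lemma code_at_catr P o l1 l2 : code_at P o (l1 ++ l2) -> code_at P (o + size l1) l2.
Proof.
case=> pre [post [-> <-]]; exists (pre ++ l1), post.
by rewrite -!catA size_cat.
Qed.

Lemma code_at_cons P o i l : code_at P o (i :: l) -> code_at P o [:: i] /\ code_at P o.+1 l.
Proof.
move=> c; split; first exact: (@code_at_catl P o [:: i] l c).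
by have := @code_at_catr P o [:: i] l c; rewrite addn1.
Qed.

Definition instr_step (pc : nat) (i : instr) (m : memory) : option (nat * memory) :=
  match i with
  | IConst r k => Some (pc.+1, upd m r k)
  | IAdd r a b => Some (pc.+1, upd m r (m a + m b))
  | ISub r a b => Some (pc.+1, upd m r (m a - m b))
  | ILoad r a => Some (pc.+1, upd m r (m (m a)))
  | IStore a r => Some (pc.+1, upd m (m a) (m r))
  | IJz r t => Some (if m r == 0 then t else pc.+1, m)
  | IHalt => None
  end.

Lemma step_code_at P o i m : code_at P o [:: i] -> step P (o, m) = instr_step o i m.
Proof.
case=> pre [post [-> <-]] /=.
by rewrite size_cat /= addnS ltnS leq_addr nth_cat ltnn subnn.
Qed.

Lemma steps_compile Z c m m' k : exec c m m' k -> Z \notin writes c -> m Z = 0 ->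
  forall P o, code_at P o (compile Z o c) -> steps P k (o, m) = Some (o + csize c, m').
Proof.
elim=> {c m m' k}.
- by move=> m _ _ P o _; rewrite addn0.
- move=> i m bi _ _ P o Pc; rewrite stepsS (step_code_at m Pc).
  by case: i bi {Pc} => //= *; rewrite addn1.
- move=> c1 c2 m m1 m2 k1 k2 e1 IH1 e2 IH2; rewrite mem_cat negb_or => /andP[Z1 Z2] mZ P o Pc.
  have m1Z : m1 Z = 0 by rewrite (exec_frame e1).
  have := code_at_catr Pc; rewrite size_compile => Pc2.
  by rewrite steps_add (IH1 Z1 mZ P o (code_at_catl Pc)) (IH2 Z2 m1Z P _ Pc2) addnA.
- move=> r b m mr _ _ P o Pc; have [Pc1 _] := code_at_cons Pc.
  by rewrite stepsS (step_code_at m Pc1) /= mr eqxx !addnS.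
- move=> r b m m1 m2 k1 k2 mr eb IHb ew IHw Zb mZ P o Pc.
  have [Pc1 Pc2] := code_at_cons Pc.
  have m1Z : m1 Z = 0 by rewrite (exec_frame eb).
  have := code_at_catr Pc2; rewrite size_compile => Pc3.
  have s1 : step P (o, m) = Some (o.+1, m) by rewrite (step_code_at m Pc1) /= (negbTE mr).
  have s2 : step P (o.+1 + csize b, m1) = Some (o, m1).
    by rewrite (step_code_at m1 Pc3) /= m1Z eqxx.
  rewrite (steps_step _ s1) -addnS steps_add (IHb Zb mZ P o.+1 (code_at_catl Pc2)).
  by rewrite (steps_step _ s2); apply: IHw.
- move=> r c1 c2 m m1 k mr e1 IH1; rewrite mem_cat negb_or => /andP[Z1 Z2] mZ P o Pc.
  have [Pc1 Pc2] := code_at_cons Pc.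
  have m1Z : m1 Z = 0 by rewrite (exec_frame e1).
  have := code_at_catr Pc2; rewrite size_compile => /code_at_cons[Pc3 _].
  have s1 : step P (o, m) = Some (o.+1, m) by rewrite (step_code_at m Pc1) /= (negbTE mr).
  rewrite (steps_step _ s1) -addn1 steps_add (IH1 Z1 mZ P o.+1 (code_at_catl Pc2)).
  rewrite stepsS (step_code_at m1 Pc3) /= m1Z eqxx.
  by congr (Some (_, _)) => /=; lia.
- move=> r c1 c2 m m1 k mr e2 IH2; rewrite mem_cat negb_or => /andP[Z1 Z2] mZ P o Pc.
  have [Pc1 Pc2] := code_at_cons Pc.
  have := code_at_catr Pc2; rewrite size_compile => /code_at_cons[_ Pc4].
  have s1 : step P (o, m) = Some ((o + csize c1).+2, m) by rewrite (step_code_at m Pc1) /= mr.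
  rewrite (steps_step _ s1) (IH2 Z2 mZ P _ Pc4).
  by congr (Some (_, _)) => /=; lia.
Qed.

Definition runs (c : cmd) (m : memory) (Q : memory -> nat -> Prop) :=
  exists m' k, exec c m m' k /\ Q m' k.

Lemma runs_weaken c m Q Q' : runs c m Q ->
  (forall m' k, frame (writes c) m m' -> Q m' k -> Q' m' k) -> runs c m Q'.
Proof. by case=> m' [k [ex q]] QQ'; exists m', k; split; last exact: QQ' (exec_frame ex) q. Qed.

Lemma runs_skip m Q : Q m 0 -> runs CSkip m Q.
Proof. by exists m, 0; split; first exact: exec_skip. Qed.

Lemma runs_seq c1 c2 m Q :
  runs c1 m (fun m1 k1 => runs c2 m1 (fun m2 k2 => Q m2 (k1 + k2))) -> runs (CSeq c1 c2) m Q.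
Proof.
case=> m1 [k1 [e1 [m2 [k2 [e2 q]]]]].
by exists m2, (k1 + k2); split; first exact: exec_seq e1 e2.
Qed.

Lemma runs_if r c1 c2 m Q :
  (m r != 0 -> runs c1 m (fun m' k => Q m' k.+2)) ->
  (m r = 0 -> runs c2 m (fun m' k => Q m' k.+1)) ->
  runs (CIf r c1 c2) m Q.
Proof.
move=> r_true r_false; have [mr | mr] := eqVneq (m r) 0.
- have [m' [k [ex q]]] := r_false mr.
  by exists m', k.+1; split; first exact: exec_if_false.
- have [m' [k [ex q]]] := r_true mr.
  by exists m', k.+2; split; first exact: exec_if_true.
Qed.

Lemma runs_while_false r b m Q : m r = 0 -> Q m 1 -> runs (CWhile r b) m Q.
Proof. by move=> mr q; exists m, 1; split; first exact: exec_while_false. Qed.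

Lemma runs_while_true r b m Q : m r != 0 ->
  runs b m (fun m1 k1 => runs (CWhile r b) m1 (fun m2 k2 => Q m2 (k1 + k2).+2)) ->
  runs (CWhile r b) m Q.
Proof.
move=> mr [m1 [k1 [e1 [m2 [k2 [e2 q]]]]]].
by exists m2, (k1 + k2).+2; split; first exact: exec_while_true e1 e2.
Qed.

Lemma runs_upd i r v m Q : basic i -> exec_instr i m = upd m r v ->
  (forall m', m' r = v -> (forall x, x != r -> m' x = m x) -> Q m' 1) -> runs (CInstr i) m Q.
Proof.
move=> bi im q; exists (exec_instr i m), 1; split; first exact: exec_instr_basic.
by rewrite im; apply: q => [|x /negbTE xr]; rewrite /upd ?eqxx ?xr.
Qed.

Lemma runs_const r v m Q :
  (forall m', m' r = v -> (forall x, x != r -> m' x = m x) -> Q m' 1) ->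
  runs (CInstr (IConst r v)) m Q.
Proof. exact: runs_upd. Qed.

Lemma runs_add r a b m Q :
  (forall m', m' r = m a + m b -> (forall x, x != r -> m' x = m x) -> Q m' 1) ->
  runs (CInstr (IAdd r a b)) m Q.
Proof. exact: runs_upd. Qed.

Lemma runs_sub r a b m Q :
  (forall m', m' r = m a - m b -> (forall x, x != r -> m' x = m x) -> Q m' 1) ->
  runs (CInstr (ISub r a b)) m Q.
Proof. exact: runs_upd. Qed.

Lemma runs_load r a m Q :
  (forall m', m' r = m (m a) -> (forall x, x != r -> m' x = m x) -> Q m' 1) ->
  runs (CInstr (ILoad r a)) m Q.
Proof. exact: runs_upd. Qed.

(* Each round of the body costs at most [Bb] steps and decreases the measure [mu],
   so the loop costs at most [mu m * (Bb + 2)] steps besides the final test. *)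
Lemma runs_while r b m (I : memory -> Prop) (mu : memory -> nat) Bb (Q : memory -> nat -> Prop) :
  I m ->
  (forall m, I m -> m r != 0 -> runs b m (fun m' k => [/\ I m', mu m' < mu m & k <= Bb])) ->
  (forall m, I m -> m r = 0 -> Q m 1) ->
  (forall m k k', Q m k -> k' <= k -> Q m k') ->
  runs (CWhile r b) m (fun m' k => Q m' (k - mu m * (Bb + 2))).
Proof.
move=> Im body exit Qmono.
elim: {m}(mu m) {-2}m (leqnn (mu m)) Im => [|N IH] m mu_m Im;
  have [mr | mr] := eqVneq (m r) 0;
  try (by apply: (runs_while_false _ mr); apply: Qmono (exit m Im mr) _; rewrite leq_subr).
- by have [m1 [k1 [_ [_ lt_mu _]]]] := body m Im mr; move: (leq_trans lt_mu mu_m).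
- have [m1 [k1 [e1 [Im1 lt_mu le_k1]]]] := body m Im mr.
  have [|m2 [k2 [e2 q]]] := IH m1 _ Im1; first by rewrite -ltnS (leq_trans lt_mu mu_m).
  exists m2, (k1 + k2).+2; split; first exact: exec_while_true e1 e2.
  apply: Qmono q _.
  have : mu m1 * (Bb + 2) + (Bb + 2) <= mu m * (Bb + 2) by rewrite addnC -mulSn leq_mul2r lt_mu orbT.
  lia.
Qed.

(* [for V < M[0] do body], with counter [V], loop test [C] and [M[one] = 1]. *)
Definition for_cmd (one V C : nat) (body : cmd) : cmd :=
  CSeq (CInstr (IConst V 0)) (CSeq (CInstr (ISub C 0 V))
    (CWhile C (CSeq body (CSeq (CInstr (IAdd V V one)) (CInstr (ISub C 0 V)))))).

Definition for_cost (n Bb : nat) := 3 + n * (Bb + 4).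

Lemma runs_for (n one V C : nat) body m (Inv : nat -> memory -> Prop) Bb :
  uniq [:: V; C; 0] -> V != one ->
  (forall k m m', Inv k m -> (forall x, x != V -> x != C -> m' x = m x) -> Inv k m') ->
  (forall k m, Inv k m -> m 0 = n /\ m one = 1) ->
  (forall k m, k < n -> Inv k m -> m V = k ->
     runs body m (fun m' kb => [/\ Inv k.+1 m', m' V = k & kb <= Bb])) ->
  Inv 0 m ->
  runs (for_cmd one V C body) m (fun m' k => Inv n m' /\ k <= for_cost n Bb).
Proof.
rewrite /= !inE !negb_or andbT -!(eq_sym 0) => /andP[/andP[VC V0] C0] V1
  Inv_frame Inv_regs bodyP Inv0.
apply: runs_seq; apply: runs_upd => //= m1 m1V m1W.
apply: runs_seq; apply: runs_upd => //= m2 m2C m2W.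
pose I m' := exists2 k, k <= n & [/\ m' V = k, m' C = n - k & Inv k m'].
pose mu m' := n - m' V.
have m2V : m2 V = 0 by rewrite m2W // m1V.
have Inv0' : Inv 0 m2 by apply: Inv_frame Inv0 _ => x xV xC; rewrite m2W // m1W.
have Im2 : I m2.
  exists 0 => //; split => //.
  by rewrite m2C m1V m1W ?subn0 ?(Inv_regs _ _ Inv0).1 // eq_sym.
have mu_m2 : mu m2 = n by rewrite /mu m2V subn0.
apply: runs_weaken
  (@runs_while C _ m2 I mu (Bb + 2) (fun m' k => Inv n m' /\ k <= 1) Im2 _ _ _) _.
- move=> m3 [k le_kn [m3V m3C Inv_k]] m3C0.
  have lt_kn : k < n by move: m3C0; rewrite m3C subn_eq0 -ltnNge.
  apply: runs_seq; apply: runs_weaken (bodyP k m3 lt_kn Inv_k m3V) _ => m4 kb _ [Inv_k1 m4V le_kb].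
  have [m4n m4one] := Inv_regs _ _ Inv_k1.
  apply: runs_seq; apply: runs_upd => //= m5 m5V m5W.
  apply: runs_upd => //= m6 m6C m6W.
  have m6V : m6 V = k.+1 by rewrite m6W // m5V m4V m4one addn1.
  split; last lia.
  + exists k.+1 => //; split => //.
    * by rewrite m6C m5V m4V m4one addn1 m5W ?m4n // eq_sym.
    * by apply: Inv_frame Inv_k1 _ => x xV xC; rewrite m6W // m5W.
  + by rewrite /mu m6V m3V; lia.
- by move=> m3 [k le_kn [m3V m3C Inv_k]] m3C0; have -> : n = k by lia.
- by move=> m3 k k' [Inv_n le_k] le_k'; split => //; apply: leq_trans le_k.
- by move=> m' k _ [Inv_n le_k]; split => //; rewrite mu_m2 /for_cost in le_k *; lia.
Qed.

Lemma decides_within_runs P t init yes k0 o Z c m :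
  steps P k0 (0, init) = Some (o, m) -> code_at P o (compile Z o c) ->
  (forall m', step P (o + csize c, m') = None) -> Z \notin writes c -> m Z = 0 ->
  runs c m (fun m' k => k0 + k <= t /\ (m' 0 != 0 <-> yes)) -> decides_within P t init yes.
Proof.
move=> pre code halt Zc mZ [m' [k [ex [le_t yes_iff]]]]; exists m'; split=> //.
apply: (run_of_steps (k := k0 + k) (st' := (o + csize c, m'))) _ (halt m') le_t.
by rewrite steps_add pre (steps_compile ex Zc mZ code).
Qed.

(* Scratch register [k < 40] of the layout with offset [R]. *)
Notation reg R k := (R + k).+2 (only parsing).

Definition input_mem n (e : rel 'I_n) l (m : memory) :=
  [/\ m 0 = n, m 1 = l & forall i j, j < i < n -> m (2 + i * n + j) = edge_nat e i j].

Definition scratch_ok n (e : rel 'I_n) l R (m : memory) :=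
  [/\ m (reg R 0) = 0, m (reg R 1) = 1 & input_mem e l m].

(* Only the strict lower triangle of the adjacency matrix is ever read. *)
Definition scratch_clear n R :=
  forall i j, j < i < n -> (2 + i * n + j < reg R 0) || (reg R 40 <= 2 + i * n + j).

Definition preserves R d o :=
  unchanged (fun x => (x != reg R o) && ((x < reg R 2) || (reg R d <= x))).

Ltac regs := rewrite /= ?inE; lia.

Lemma scratch_ok_preserves n (e : rel 'I_n) l R d o m m' : scratch_clear n R ->
  d <= 40 -> 2 <= o < 40 -> preserves R d o m m' -> scratch_ok e l R m -> scratch_ok e l R m'.
Proof.
move=> R_clear d40 o_scratch pres [m0 m1 [mn ml mE]].
have out x : (x < reg R 2) || (reg R 40 <= x) -> m' x = m x.
  by move=> x_out; apply: pres; regs.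
split; last split.
- by rewrite out ?m0 //; regs.
- by rewrite out ?m1 //; regs.
- by rewrite out ?mn //; regs.
- by rewrite out ?ml //; regs.
- by move=> i j ji; rewrite out ?mE //; have := R_clear _ _ ji; regs.
Qed.

Definition mov R r a := CInstr (IAdd r a (reg R 0)).

Definition mul_loop R :=
  CWhile (reg R 7) (CSeq (CInstr (IAdd (reg R 6) (reg R 6) 0))
                         (CInstr (ISub (reg R 7) (reg R 7) (reg R 1)))).

(* [M[6] := 2 + M[4] * M[0] + M[5]], the address of entry [(M[4], M[5])]. *)
Definition addr_cmd R :=
  CSeq (CInstr (IConst (reg R 6) 0)) (CSeq (mov R (reg R 7) (reg R 4))
  (CSeq (mul_loop R) (CSeq (CInstr (IAdd (reg R 6) (reg R 6) (reg R 5)))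
  (CSeq (CInstr (IAdd (reg R 6) (reg R 6) (reg R 1)))
        (CInstr (IAdd (reg R 6) (reg R 6) (reg R 1))))))).

Definition lookup_cmd R out := CSeq (addr_cmd R) (CInstr (ILoad out (reg R 6))).

Lemma runs_mul_loop n R h m :
  m (reg R 7) = h -> m 0 = n -> m (reg R 1) = 1 ->
  runs (mul_loop R) m (fun m' k => k <= 1 + 4 * h /\ m' (reg R 6) = m (reg R 6) + h * n).
Proof.
elim: h m => [|h IH] m m7 m0 m1; rewrite /mul_loop.
  by apply: runs_while_false => //; rewrite mul0n addn0.
apply: runs_while_true; first by rewrite m7.
apply: runs_seq; apply: runs_add => m2 m26 m2W; apply: runs_sub => m3 m37 m3W.
apply: runs_weaken (IH m3 _ _ _) _.
- by rewrite m37 !m2W ?m7 ?m1 ?subn1 //; regs.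
- by rewrite m3W ?m2W //; regs.
- by rewrite m3W ?m2W //; regs.
move=> m' k _ [le_k m'6]; split; first lia.
by rewrite m'6 m3W ?m26 ?m0 ?mulSn; [lia | regs].
Qed.

Lemma runs_addr n R h lo m : m (reg R 0) = 0 -> m (reg R 1) = 1 -> m 0 = n ->
  m (reg R 4) = h -> m (reg R 5) = lo ->
  runs (addr_cmd R) m (fun m' k => k <= 4 * h + 6 /\ m' (reg R 6) = 2 + h * n + lo).
Proof.
move=> mz one m0 row col.
apply: runs_seq; apply: runs_const => m2 m26 m2W.
apply: runs_seq; apply: runs_add => m3 m37 m3W.
apply: runs_seq; apply: runs_weaken (@runs_mul_loop n R h m3 _ _ _) _.
- by rewrite m37 !m2W ?row ?mz ?addn0 //; regs.
- by rewrite m3W ?m2W.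
- by rewrite m3W ?m2W //; regs.
move=> m4 k f [le_k m46].
have keep x : x != reg R 6 -> x != reg R 7 -> m4 x = m3 x.
  by move=> x6 x7; apply: f; rewrite /= !inE negb_or x6.
apply: runs_seq; apply: runs_add => m5 m56 m5W.
apply: runs_seq; apply: runs_add => m6 m66 m6W.
apply: runs_add => m7 m76 m7W; split; first lia.
have m31 : m3 (reg R 1) = 1 by rewrite m3W ?m2W //; regs.
have m36 : m3 (reg R 6) = 0 by rewrite m3W //; regs.
have m45 : m4 (reg R 5) = lo by rewrite keep ?m3W ?m2W //; regs.
have m41 : m4 (reg R 1) = 1 by rewrite keep //; regs.
have m61 : m6 (reg R 1) = 1 by rewrite m6W ?m5W //; regs.
by rewrite m76 m66 m56 m46 m36 m45 m61 (m5W _ (_ : reg R 1 != _)) ?m41; [lia | regs].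
Qed.

Lemma runs_lookup n (e : rel 'I_n) l R out h lo m : scratch_clear n R ->
  scratch_ok e l R m -> m (reg R 4) = h -> m (reg R 5) = lo -> lo < h < n ->
  runs (lookup_cmd R out) m (fun m' k => k <= 4 * n + 7 /\ m' out = edge_nat e h lo).
Proof.
move=> R_clear [mz one [mn _ mE]] row col lo_h_n.
apply: runs_seq; apply: runs_weaken (runs_addr mz one mn row col) _ => m1 k f [le_k m16].
have addr_out : (2 + h * n + lo < reg R 0) || (reg R 40 <= 2 + h * n + lo).
  exact: R_clear.
apply: runs_load => m2 m2o _; split; first by move: lo_h_n; nia.
by rewrite m2o m16 f ?mE //; regs.
Qed.

Definition near_nat n (e : rel 'I_n) i j := (i == j) || edge_nat e i j.

Definition lookup_from_cmd R a b out :=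
  CSeq (mov R (reg R 4) a) (CSeq (mov R (reg R 5) b) (lookup_cmd R out)).

Lemma runs_lookup_from n (e : rel 'I_n) l R a b out h lo m : scratch_clear n R ->
  scratch_ok e l R m -> b != reg R 4 -> m a = h -> m b = lo -> lo < h < n ->
  runs (lookup_from_cmd R a b out) m (fun m' k => k <= 4 * n + 9 /\ m' out = edge_nat e h lo).
Proof.
move=> R_clear ok b4 ma mb lo_h_n.
apply: runs_seq; apply: runs_add => m1 m14 m1W.
apply: runs_seq; apply: runs_add => m2 m25 m2W.
have ok2 : scratch_ok e l R m2.
  apply: (scratch_ok_preserves (d := 8) (o := 4)) R_clear _ _ _ ok => // x x_out.
  by rewrite m2W ?m1W //; regs.
have [mz _ _] := ok.
apply: runs_weaken (runs_lookup out R_clear ok2 _ _ lo_h_n) _ => [||m' k _ [le_k ->]] //.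
- by rewrite m2W ?m14 ?ma ?mz ?addn0 //; regs.
- by rewrite m25 !m1W ?mb ?mz ?addn0 //; regs.
- by split=> //; lia.
Qed.

Definition near_cmd R i j o :=
  CSeq (CInstr (ISub (reg R 2) (reg R i) (reg R j)))
  (CSeq (CInstr (ISub (reg R 3) (reg R j) (reg R i)))
  (CIf (reg R 2) (lookup_from_cmd R (reg R i) (reg R j) (reg R o))
  (CIf (reg R 3) (lookup_from_cmd R (reg R j) (reg R i) (reg R o))
     (CInstr (IConst (reg R o) 1))))).

Definition implements n (e : rel 'I_n) l R d (rel : nat -> nat -> nat -> cmd)
    (f : nat -> nat -> bool) (B : nat) :=
  forall i j o m, d <= i < 40 -> d <= j < 40 -> d <= o < 40 -> o != i -> o != j ->
  scratch_ok e l R m -> m (reg R i) < n -> m (reg R j) < n ->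
  runs (rel i j o) m (fun m' k =>
    [/\ k <= B, m' (reg R o) = f (m (reg R i)) (m (reg R j)) & preserves R d o m m']).

Lemma edge_natC n (e : rel 'I_n) : symmetric e -> symmetric (edge_nat e).
Proof.
move=> e_sym i j; rewrite /edge_nat.
by case: (insub i) => [x|]; case: (insub j) => [y|].
Qed.

Lemma near_cmd_implements n (e : rel 'I_n) l R : symmetric e -> scratch_clear n R ->
  implements e l R 8 (near_cmd R) (near_nat e) (4 * n + 15).
Proof.
move=> e_sym R_clear i j o m i_in j_in o_in _ _ ok mi mj.
suff: runs (near_cmd R i j o) m
    (fun m' k => k <= 4 * n + 15 /\ m' (reg R o) = near_nat e (m (reg R i)) (m (reg R j))).
  by move/runs_weaken; apply=> m' k f [le_k m'o]; split=> // x x_out; apply: f; regs.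
apply: runs_seq; apply: runs_sub => m1 m12 m1W.
apply: runs_seq; apply: runs_sub => m2 m23 m2W.
have keep x : x != reg R 2 -> x != reg R 3 -> m2 x = m x by move=> *; rewrite m2W ?m1W.
have ok2 : scratch_ok e l R m2.
  apply: (scratch_ok_preserves (d := 8) (o := 2)) R_clear _ _ _ ok => // x x_out.
  by apply: keep; regs.
have [mi2 mj2] : m2 (reg R i) = m (reg R i) /\ m2 (reg R j) = m (reg R j).
  by split; apply: keep; regs.
have m2_2 : m2 (reg R 2) = m (reg R i) - m (reg R j) by rewrite m2W ?m12 //; regs.
have m2_3 : m2 (reg R 3) = m (reg R j) - m (reg R i) by rewrite m23 !m1W //; regs.
apply: runs_if => [m22 | /eqP m22].
  have lt_ji : m (reg R j) < m (reg R i) by rewrite -subn_gt0 -m2_2 lt0n.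
  apply: runs_weaken (runs_lookup_from (reg R o) R_clear ok2 _ mi2 mj2 _) _.
  - regs.
  - by rewrite lt_ji mi.
  move=> m' k _ [le_k ->]; split; first lia.
  by rewrite /near_nat eq_sym (ltn_eqF lt_ji).
apply: runs_if => [m33 | /eqP m33].
  have lt_ij : m (reg R i) < m (reg R j) by rewrite -subn_gt0 -m2_3 lt0n.
  apply: runs_weaken (runs_lookup_from (reg R o) R_clear ok2 _ mj2 mi2 _) _.
  - regs.
  - by rewrite lt_ij mj.
  move=> m' k _ [le_k ->]; split; first lia.
  by rewrite /near_nat (ltn_eqF lt_ij) edge_natC.
apply: runs_const => m' -> _; split; first lia.
move: m22 m33; rewrite m2_2 m2_3 => /eqP ij /eqP ji.
by rewrite /near_nat (_ : _ == _) //; apply/eqP; lia.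
Qed.
Arguments near_cmd_implements {n e} l {R}.


Lemma has_iotaS (f : pred nat) k : has f (iota 0 k.+1) = has f (iota 0 k) || f k.
Proof. by rewrite -addn1 iotaD has_cat /= orbF. Qed.

Lemma count_iotaS (f : pred nat) k : count f (iota 0 k.+1) = count f (iota 0 k) + f k.
Proof. by rewrite -addn1 iotaD count_cat /= addn0. Qed.

(* [M[o] := exists a < n, rel (M[i], a) && near (a, M[j])], with counter [d], bound [d+1]
   and the two tests in [d+2], [d+3]. *)
Definition compose_cmd R (rel : nat -> nat -> nat -> cmd) d i j o :=
  CSeq (CInstr (IConst (reg R o) 0))
  (for_cmd (reg R 1) (reg R d) (reg R d.+1)
     (CSeq (rel i d d.+2)
        (CIf (reg R d.+2)
           (CSeq (near_cmd R d j d.+3) (CIf (reg R d.+3) (CInstr (IConst (reg R o) 1)) CSkip))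
           CSkip))).

Definition compose_nat n (e : rel 'I_n) (f : nat -> nat -> bool) i j :=
  has (fun a => f i a && near_nat e a j) (iota 0 n).

Definition compose_cost n B := 1 + for_cost n (B + 4 * n + 20).

Lemma compose_cmd_implements n (e : rel 'I_n) l R d rel f B :
  symmetric e -> scratch_clear n R -> 8 <= d -> d + 4 <= 40 ->
  implements e l R d rel f B ->
  implements e l R (d + 4) (compose_cmd R rel d) (compose_nat e f) (compose_cost n B).
Proof.
move=> e_sym R_clear d8 d40 relP i j o m i_in j_in o_in oi oj ok mi mj.
set p := m (reg R i); set q := m (reg R j).
have ok_of m' : preserves R (d + 4) o m m' -> scratch_ok e l R m'.
  by move=> pres; apply: scratch_ok_preserves pres ok => //; lia.
pose g a := f p a && near_nat e a q.
pose Inv k m' := preserves R (d + 4) o m m' /\ m' (reg R o) = has g (iota 0 k).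
apply: runs_seq; apply: runs_const => m1 m1o m1W.
apply: runs_weaken (@runs_for n (reg R 1) (reg R d) (reg R d.+1) _ m1 Inv
  (B + 4 * n + 20) _ _ _ _ _ _) _.
- by rewrite /= !inE; lia.
- by lia.
- move=> k m2 m3 [pres2 m2o] m3W; split; last by rewrite m3W ?m2o //; lia.
  by apply: unchanged_trans pres2 _ => x x_out; rewrite m3W //; lia.
- by move=> k m2 [pres2 _]; have [_ m21 [m20 _ _]] := ok_of m2 pres2.
- move=> k m2 lt_kn [pres2 m2o] m2d.
  have [_ _ [m20 _ _]] := ok_of m2 pres2.
  have [m2i m2j] : m2 (reg R i) = p /\ m2 (reg R j) = q by split; apply: pres2; lia.
  apply: runs_seq; apply: runs_weaken (relP i d d.+2 m2 _ _ _ _ _ (ok_of _ pres2) _ _) _;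
    rewrite ?m2i ?m2d //; try lia.
  move=> m3 k3 _ [le_k3 m3t pres3].
  have pres23 : preserves R (d + 4) o m m3.
    by apply: unchanged_trans pres2 (unchanged_sub _ pres3) => x; lia.
  have [m3o m3d m3j] : [/\ m3 (reg R o) = m2 (reg R o), m3 (reg R d) = k & m3 (reg R j) = q].
    by split; rewrite -?m2d -?m2j; apply: pres3; lia.
  apply: runs_if => [t1 | t0]; last first.
    apply: runs_skip; split=> //; last lia; split=> //.
    by rewrite m3o m2o has_iotaS /g; move: t0; rewrite m3t; case: (f p k) => //= _; rewrite orbF.
  apply: runs_seq; apply: runs_weaken (near_cmd_implements l e_sym R_clear d j d.+3 m3
    _ _ _ _ _ (ok_of _ pres23) _ _) _; rewrite ?m3d ?m3j //; try lia.
  move=> m4 k4 _ [le_k4 m4u pres4].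
  have pres34 : preserves R (d + 4) o m m4.
    by apply: unchanged_trans pres23 (unchanged_sub _ pres4) => x; lia.
  have [m4o m4d] : m4 (reg R o) = m3 (reg R o) /\ m4 (reg R d) = k.
    by split; rewrite -?m3d; apply: pres4; lia.
  have fk : f p k by move: t1; rewrite m3t; case: (f p k).
  apply: runs_if => [u1 | u0].
    apply: runs_const => m5 m5o m5W; split; [split | | lia].
    + by apply: unchanged_trans pres34 _ => x x_out; rewrite m5W //; lia.
    + by move: u1; rewrite m4u m5o has_iotaS /g fk; case: (near_nat e k q); rewrite ?orbT.
    + by rewrite m5W ?m4d //; lia.
  apply: runs_skip; split=> //; last lia; split=> //.
  rewrite m4o m3o m2o has_iotaS /g fk /=.
  by move: u0; rewrite m4u; case: (near_nat e k q) => //= _; rewrite orbF.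
- split; last by rewrite m1o.
  by move=> x x_out; rewrite m1W //; lia.
by move=> m' k _ [[pres' m'o] le_k]; split => //; rewrite /compose_cost; lia.
Qed.
Arguments compose_cmd_implements {n e l R d rel f B}.


(* [M[19] := #{a < n | mem (M[i], a)}] and [M[20] := exists a < n, ~~ mem (M[i], a)]. *)
Definition ball_cmd R (mem : nat -> nat -> nat -> cmd) i :=
  CSeq (CInstr (IConst (reg R 19) 0)) (CSeq (CInstr (IConst (reg R 20) 0))
  (for_cmd (reg R 1) (reg R 16) (reg R 17)
     (CSeq (mem i 16 18)
        (CIf (reg R 18) (CInstr (IAdd (reg R 19) (reg R 19) (reg R 1)))
                        (CInstr (IConst (reg R 20) 1)))))).

Definition ball_cost n B := 2 + for_cost n (B + 3).

Lemma runs_ball_cmd n (e : rel 'I_n) l R mem f B i m :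
  scratch_clear n R -> implements e l R 16 mem f B -> 21 <= i < 40 ->
  scratch_ok e l R m -> m (reg R i) < n ->
  runs (ball_cmd R mem i) m (fun m' k => [/\ k <= ball_cost n B,
    m' (reg R 19) = count (f (m (reg R i))) (iota 0 n),
    m' (reg R 20) = has (predC (f (m (reg R i)))) (iota 0 n) & preserves R 21 19 m m']).
Proof.
move=> R_clear memP i_in ok mi; set p := m (reg R i).
have ok_of m' : preserves R 21 19 m m' -> scratch_ok e l R m'.
  by move=> pres; apply: scratch_ok_preserves pres ok.
pose Inv k m' := [/\ preserves R 21 19 m m', m' (reg R 19) = count (f p) (iota 0 k)
  & m' (reg R 20) = has (predC (f p)) (iota 0 k)].
apply: runs_seq; apply: runs_const => m1 m1c m1W.
apply: runs_seq; apply: runs_const => m2 m2h m2W.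
apply: runs_weaken (@runs_for n (reg R 1) (reg R 16) (reg R 17) _ m2 Inv (B + 3) _ _ _ _ _ _) _.
- by rewrite /= !inE; lia.
- by lia.
- move=> k m3 m4 [pres3 m3c m3h] m4W; split; rewrite ?m4W //; try lia.
  by apply: unchanged_trans pres3 _ => x x_out; rewrite m4W //; lia.
- by move=> k m3 [pres3 _ _]; have [_ m31 [m30 _ _]] := ok_of m3 pres3.
- move=> k m3 lt_kn [pres3 m3c m3h] m3a.
  have m3i : m3 (reg R i) = p by apply: pres3; lia.
  apply: runs_seq; apply: runs_weaken (memP i 16 18 m3 _ _ _ _ _ (ok_of _ pres3) _ _) _;
    rewrite ?m3i ?m3a //; try lia.
  move=> m4 k4 _ [le_k4 m4t pres4].
  have pres34 : preserves R 21 19 m m4.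
    by apply: unchanged_trans pres3 (unchanged_sub _ pres4) => x; lia.
  have [m4c m4h m4a] : [/\ m4 (reg R 19) = m3 (reg R 19), m4 (reg R 20) = m3 (reg R 20)
    & m4 (reg R 16) = k] by split; rewrite -?m3a; apply: pres4; lia.
  have [_ m41 _] := ok_of _ pres34.
  apply: runs_if => [t1 | t0].
    have fk : f p k by move: t1; rewrite m4t; case: (f p k).
    apply: runs_add => m5 m5c m5W; split; [split | | lia].
    + by apply: unchanged_trans pres34 _ => x x_out; rewrite m5W //; lia.
    + by rewrite m5c m4c m3c m41 count_iotaS fk.
    + by rewrite m5W ?m4h ?m3h ?has_iotaS /= ?fk ?orbF //; lia.
    + by rewrite m5W ?m4a //; lia.
  have fk : f p k = false by move: t0; rewrite m4t; case: (f p k).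
  apply: runs_const => m5 m5h m5W; split; [split | | lia].
  + by apply: unchanged_trans pres34 _ => x x_out; rewrite m5W //; lia.
  + by rewrite m5W ?m4c ?m3c ?count_iotaS ?fk ?addn0 //; lia.
  + by rewrite m5h has_iotaS /= fk orbT.
  + by rewrite m5W ?m4a //; lia.
- split; rewrite ?m2h ?m2W ?m1c //; try lia.
  by move=> x x_out; rewrite m2W ?m1W //; lia.
by move=> m' k _ [[pres' m'c m'h] le_k]; split => //; rewrite /ball_cost; lia.
Qed.

Definition far_nat n (f : nat -> nat -> bool) p := has (predC (f p)) (iota 0 n).

Definition max_ball_nat n (f : nat -> nat -> bool) :=
  if has (far_nat n f) (iota 0 n)
  then \max_(0 <= p < n | far_nat n f p) count (f p) (iota 0 n) else n.

(* [M[0] := (M[1] <= max_ball_nat n mem)], with [M[23]] holding the running maximum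
   and [M[24]] recording whether a far vertex was seen. *)
Definition max_ball_cmd R (mem : nat -> nat -> nat -> cmd) :=
  CSeq (CInstr (IConst (reg R 23) 0)) (CSeq (CInstr (IConst (reg R 24) 0))
  (CSeq (for_cmd (reg R 1) (reg R 21) (reg R 22)
     (CSeq (ball_cmd R mem 21)
        (CIf (reg R 20)
           (CSeq (CInstr (IConst (reg R 24) 1))
              (CSeq (CInstr (ISub (reg R 25) (reg R 19) (reg R 23)))
                    (CIf (reg R 25) (mov R (reg R 23) (reg R 19)) CSkip)))
           CSkip)))
  (CSeq (CIf (reg R 24) CSkip (mov R (reg R 23) 0))
  (CSeq (CInstr (ISub (reg R 25) 1 (reg R 23)))
        (CIf (reg R 25) (CInstr (IConst 0 0)) (CInstr (IConst 0 1))))))).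

Definition max_ball_cost n B := 2 + for_cost n (ball_cost n B + 7) + 6.

Lemma bigmax_nat_recr (c : pred nat) (g : nat -> nat) k :
  \max_(0 <= p < k.+1 | c p) g p = if c k then maxn (\max_(0 <= p < k | c p) g p) (g k)
                                   else \max_(0 <= p < k | c p) g p.
Proof. by rewrite !(big_mkcond c) big_nat_recr //=; case: (c k); rewrite ?maxn0. Qed.

Lemma runs_max_ball_cmd n (e : rel 'I_n) l R mem f B m :
  scratch_clear n R -> implements e l R 16 mem f B -> scratch_ok e l R m ->
  runs (max_ball_cmd R mem) m
    (fun m' k => k <= max_ball_cost n B /\ (m' 0 != 0) = (l <= max_ball_nat n f)).
Proof.
move=> R_clear memP ok.
have ok_of m1 m2 : preserves R 40 23 m1 m2 -> scratch_ok e l R m1 -> scratch_ok e l R m2.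
  by move=> pres; apply: scratch_ok_preserves pres.
pose best k := \max_(0 <= p < k | far_nat n f p) count (f p) (iota 0 n).
pose Inv k m' := [/\ scratch_ok e l R m', m' (reg R 23) = best k
  & m' (reg R 24) = has (far_nat n f) (iota 0 k)].
apply: runs_seq; apply: runs_const => m1 m1b m1W.
apply: runs_seq; apply: runs_const => m2 m2h m2W.
have ok2 : scratch_ok e l R m2.
  by apply: ok_of ok => x x_out; rewrite m2W ?m1W //; lia.
apply: runs_seq.
apply: runs_weaken (@runs_for n (reg R 1) (reg R 21) (reg R 22) _ m2 Inv
  (ball_cost n B + 7) _ _ _ _ _ _) _.
- by rewrite /= !inE; lia.
- by lia.
- move=> k m3 m4 [ok3 m3b m3h] m4W; split; rewrite ?m4W //; try lia.
  by apply: ok_of ok3 => x x_out; rewrite m4W //; lia.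
- by move=> k m3 [[_ m31 [m30 _ _]] _ _].
- move=> k m3 lt_kn [ok3 m3b m3h] m3p.
  apply: runs_seq; apply: runs_weaken (runs_ball_cmd R_clear memP _ ok3 _) _;
    rewrite ?m3p //.
  move=> m4 k4 _ [le_k4 m4c m4h pres4].
  have ok4 : scratch_ok e l R m4 by apply: scratch_ok_preserves pres4 ok3.
  have [m4b m4f m4p] : [/\ m4 (reg R 23) = best k, m4 (reg R 24) = m3 (reg R 24)
    & m4 (reg R 21) = k] by split; rewrite -?m3b -?m3p; apply: pres4; lia.
  apply: runs_if => [t1 | t0]; last first.
    have farF : far_nat n f k = false by move: t0; rewrite m4h /far_nat; case: has.
    apply: runs_skip; split=> //; last lia; split=> //.
    + by rewrite m4b /best bigmax_nat_recr farF.
    + by rewrite m4f m3h has_iotaS farF orbF.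
  have farT : far_nat n f k by move: t1; rewrite m4h /far_nat; case: has.
  apply: runs_seq; apply: runs_const => m5 m5h m5W.
  apply: runs_seq; apply: runs_sub => m6 m6d m6W.
  have keep6 x : x != reg R 24 -> x != reg R 25 -> m6 x = m4 x.
    by move=> x24 x25; rewrite m6W ?m5W.
  have ok6 : scratch_ok e l R m6 by apply: ok_of ok4 => x x_out; apply: keep6; lia.
  have [m6c m6b m6p] : [/\ m6 (reg R 19) = count (f k) (iota 0 n), m6 (reg R 23) = best k
    & m6 (reg R 21) = k] by split; rewrite keep6 //; lia.
  have m6f : m6 (reg R 24) = 1 by rewrite m6W ?m5h //; lia.
  have m6d' : m6 (reg R 25) = count (f k) (iota 0 n) - best k by rewrite m6d !m5W ?m4c ?m4b //; lia.
  have m6h' : m6 (reg R 24) = has (far_nat n f) (iota 0 k.+1) by rewrite m6f has_iotaS farT orbT.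
  have best_k1 : best k.+1 = maxn (best k) (count (f k) (iota 0 n)).
    by rewrite /best bigmax_nat_recr farT.
  apply: runs_if => [u1 | u0].
    apply: runs_add => m7 m7b m7W; split; [split | | lia].
    + by apply: ok_of ok6 => x x_out; rewrite m7W //; lia.
    + rewrite m7b m6c; have [mz _ _] := ok6; rewrite mz addn0 best_k1.
      by move: u1; rewrite m6d' subn_eq0 -ltnNge => /ltnW/maxn_idPr.
    + by rewrite m7W //; lia.
    + by rewrite m7W //; lia.
  apply: runs_skip; split=> //; last lia; split=> //.
  by move: u0; rewrite m6b m6d' best_k1 => /eqP; rewrite subn_eq0 => /maxn_idPl.
- by split=> //; rewrite m2W ?m1b /best ?big_geq //; lia.
move=> m3 k3 _ [[ok3 m3b m3h] le_k3].
have [mz _ [m3n m3l _]] := ok3.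
apply: runs_seq; apply: runs_weaken (_ : runs (CIf (reg R 24) CSkip (mov R (reg R 23) 0)) m3
  (fun m4 k4 => k4 <= 2 /\ m4 1 = l /\ m4 (reg R 23) = max_ball_nat n f)) _.
  apply: runs_if => [h1 | h0].
    by apply: runs_skip; rewrite m3b /max_ball_nat; move: h1; rewrite m3h; case: has.
  apply: runs_add => m4 m4b m4W; split=> //; split; first by rewrite m4W //; lia.
  by rewrite m4b m3n mz addn0 /max_ball_nat; move: h0; rewrite m3h; case: has.
move=> m4 k4 _ [le_k4 [m4l m4b]].
apply: runs_seq; apply: runs_sub => m5 m5d m5W.
have m5d' : m5 (reg R 25) = l - max_ball_nat n f by rewrite m5d m4l m4b.
by apply: runs_if => d; apply: runs_const => m6 m60 _; rewrite m60 /max_ball_cost; lia.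
Qed.

Lemma count_iota_card n (f : pred nat) : count f (iota 0 n) = #|[pred x : 'I_n | f x]|.
Proof. by rewrite -val_enum_ord count_map -size_filter cardE enumT /enum_mem. Qed.

Lemma has_iota_exists n (f : pred nat) : has f (iota 0 n) = [exists x : 'I_n, f x].
Proof. by rewrite -val_enum_ord has_map; apply/hasP/existsP => -[x]; exists x; rewrite ?mem_enum. Qed.

Definition agrees n (f : nat -> nat -> bool) (r : rel 'I_n) := forall x y : 'I_n, f x y = r x y.

Lemma edge_natE n (e : rel 'I_n) (x y : 'I_n) : edge_nat e x y = e x y.
Proof. by rewrite /edge_nat !valK. Qed.

Lemma near_nat_agrees n (e : rel 'I_n) : agrees (near_nat e) (near e).
Proof. by move=> x y; rewrite /near_nat edge_natE. Qed.

Lemma compose_nat_agrees n (e : rel 'I_n) f r : agrees f r ->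
  agrees (compose_nat e f) (fun x y => [exists a, r x a && near e a y]).
Proof.
move=> fr x y; rewrite /compose_nat has_iota_exists.
by apply: eq_existsb => a; rewrite fr near_nat_agrees.
Qed.

Lemma max_ball_nat_agrees n (f : nat -> nat -> bool) (r : rel 'I_n) : agrees f r ->
  max_ball_nat n f = max_ball r.
Proof.
move=> fr.
have farE (x : 'I_n) : far_nat n f x = far r x.
  by rewrite /far_nat has_iota_exists; apply: eq_existsb => y; rewrite /= fr.
have cardE (x : 'I_n) : count (f x) (iota 0 n) = #|ball r x|.
  by rewrite count_iota_card; apply: eq_card => y; rewrite !inE fr.
rewrite /max_ball_nat /max_ball has_iota_exists (eq_existsb farE) big_mkord.
by congr (if _ then _ else _); apply: eq_big => x; rewrite ?farE ?cardE.
Qed.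

Lemma implements_le n (e : rel 'I_n) l R d d' rel f B B' :
  implements e l R d rel f B -> d <= d' -> B <= B' -> implements e l R d' rel f B'.
Proof.
move=> relP le_d le_B i j o m i_in j_in o_in oi oj ok mi mj.
apply: runs_weaken (relP i j o m _ _ _ oi oj ok mi mj) _; try lia.
move=> m' k _ [le_k m'o pres]; split=> //; first lia.
by apply: unchanged_sub pres => x; lia.
Qed.
Arguments implements_le {n e l R d d' rel f B B'}.


Lemma for_cost_poly n Bb c d : Bb <= c * n.+1 ^ d -> for_cost n Bb <= (c + 4) * n.+1 ^ d.+1.
Proof.
move=> le_Bb; rewrite /for_cost expnS.
have : 1 <= n.+1 ^ d by rewrite expn_gt0.
nia.
Qed.

Lemma compose_cost_poly n B c d : 0 < d -> B <= c * n.+1 ^ d ->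
  compose_cost n B <= (c + 29) * n.+1 ^ d.+1.
Proof.
move=> d_gt0 le_B; rewrite /compose_cost.
have le_n : n.+1 <= n.+1 ^ d by rewrite -{1}(expn1 n.+1) leq_pexp2l.
have : 1 <= n.+1 ^ d.+1 by rewrite expn_gt0.
have := @for_cost_poly n (B + 4 * n + 20) (c + 24) d; lia.
Qed.

Definition within2_cmd R := compose_cmd R (near_cmd R) 8.

Definition within3_cmd R := compose_cmd R (within2_cmd R) 12.

Definition mem_cost n := 77 * n.+1 ^ 3.

Section Membership.
Variables (n : nat) (e : rel 'I_n) (l R : nat).
Hypotheses (e_sym : symmetric e) (R_clear : scratch_clear n R).

Lemma within2_cmd_implements :
  implements e l R 16 (within2_cmd R) (compose_nat e (near_nat e)) (mem_cost n).
Proof.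
have le_cost : compose_cost n (4 * n + 15) <= mem_cost n.
  have := @compose_cost_poly n (4 * n + 15) 19 1; rewrite /mem_cost.
  have : n.+1 ^ 2 <= n.+1 ^ 3 by rewrite leq_pexp2l.
  nia.
exact: (implements_le (compose_cmd_implements (d := 8) e_sym R_clear isT isT
  (near_cmd_implements l e_sym R_clear)) (isT : 12 <= 16) le_cost).
Qed.

Lemma within3_cmd_implements : implements e l R 16 (within3_cmd R)
  (compose_nat e (compose_nat e (near_nat e))) (mem_cost n).
Proof.
have w2 : implements e l R 12 (within2_cmd R) (compose_nat e (near_nat e)) (48 * n.+1 ^ 2).
  have le_cost : compose_cost n (4 * n + 15) <= 48 * n.+1 ^ 2.
    by have := @compose_cost_poly n (4 * n + 15) 19 1; lia.
  exact: (implements_le (compose_cmd_implements (d := 8) e_sym R_clear isT isT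
    (near_cmd_implements l e_sym R_clear)) (isT : 12 <= 12) le_cost).
exact: (implements_le (compose_cmd_implements (d := 12) e_sym R_clear isT isT w2) (isT : 16 <= 16)
  (@compose_cost_poly n _ 48 2 isT (leqnn _))).
Qed.

End Membership.

Definition mem_cmd s R := if s == 2 then within2_cmd R else within3_cmd R.

Definition alg_cmd s R := CSeq (CInstr (IConst (reg R 1) 1)) (max_ball_cmd R (mem_cmd s R)).

Definition alg_cost n := 1 + max_ball_cost n (mem_cost n).

Lemma alg_cost_poly n : alg_cost n <= 110 * n.+1 ^ 5.
Proof.
have ball : ball_cost n (mem_cost n) <= 86 * n.+1 ^ 4.
  have := @for_cost_poly n (mem_cost n + 3) 80 3; rewrite /ball_cost /mem_cost.
  have : 1 <= n.+1 ^ 3 by rewrite expn_gt0.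
  have : 1 <= n.+1 ^ 4 by rewrite expn_gt0.
  lia.
have := @for_cost_poly n (ball_cost n (mem_cost n) + 7) 93 4; rewrite /alg_cost /max_ball_cost.
have : 1 <= n.+1 ^ 4 by rewrite expn_gt0.
have : 1 <= n.+1 ^ 5 by rewrite expn_gt0.
lia.
Qed.

Lemma alg_cmd_correct n (e : rel 'I_n) l s R m :
  2 <= s -> symmetric e -> irreflexive e -> indep_number_le2 e -> scratch_clear n R ->
  m (reg R 0) = 0 -> input_mem e l m ->
  runs (alg_cmd s R) m (fun m' k => k <= alg_cost n /\ (m' 0 != 0 <-> sclub_yes e s l)).
Proof.
move=> s_ge2 e_sym e_irr alpha2 R_clear mz [m0 m1 mE].
apply: runs_seq; apply: runs_const => m' m'1 m'W.
have ok : scratch_ok e l R m'.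
  split=> //; first by rewrite m'W //; lia.
  split; [by rewrite m'W //; lia | by rewrite m'W //; lia | move=> i j ji].
  by rewrite m'W ?mE //; have := R_clear _ _ ji; lia.
rewrite /mem_cmd; case: eqP => [-> | s_ne2] /=.
  apply: runs_weaken (runs_max_ball_cmd R_clear (within2_cmd_implements (l := l) e_sym R_clear) ok) _.
  move=> m'' k _ [le_k ->]; split; first by rewrite /alg_cost; lia.
  by rewrite (max_ball_nat_agrees (compose_nat_agrees e (near_nat_agrees e))) sclub2_yesE.
apply: runs_weaken (runs_max_ball_cmd R_clear (within3_cmd_implements (l := l) e_sym R_clear) ok) _.
move=> m'' k _ [le_k ->]; split; first by rewrite /alg_cost; lia.
rewrite (max_ball_nat_agrees (compose_nat_agrees e (compose_nat_agrees e (near_nat_agrees e)))).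
by rewrite sclub3_yesE //; lia.
Qed.

(* For [n < 40] the scratch registers are placed above the adjacency matrix; for
   [n >= 40] they sit in [2 .. 41], below every entry of its strict lower triangle. *)
Definition offset n := if n < 40 then 1600 else 0.

Definition entry s n := if n < 40 then 3 else 4 + csize (alg_cmd s 1600).

(* [M[2] := 40 - n] doubles as the zero register [reg 0 0] when [n >= 40]. *)
Definition prog s : program :=
  [:: IConst 2 40; ISub 2 2 0; IJz 2 (4 + csize (alg_cmd s 1600))] ++
  compile (reg 1600 0) 3 (alg_cmd s 1600) ++ IHalt ::
  compile (reg 0 0) (4 + csize (alg_cmd s 1600)) (alg_cmd s 0).

Lemma offset_clear n : scratch_clear n (offset n).
Proof. by move=> i j /andP[ji i_lt_n]; rewrite /offset; case: (ltnP n 40) => n40; nia. Qed.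

Lemma init_mem_lower n (e : rel 'I_n) l i j : j < i < n ->
  init_mem e l (2 + i * n + j) = edge_nat e i j.
Proof.
move=> /andP[ji i_lt_n]; have n_gt0 : 0 < n by lia.
rewrite /init_mem -[2 + i * n + j]/((i * n + j).+2) /=.
rewrite (_ : (i * n + j).+2 < 2 + n * n); last by nia.
by rewrite -addn2 addnK divnMDl // modnMDl divn_small ?modn_small ?addn0 //; lia.
Qed.

Lemma prog_prefix s n (e : rel 'I_n) l : exists2 m,
  steps (prog s) 3 (0, init_mem e l) = Some (entry s n, m) &
  input_mem e l m /\ m (reg (offset n) 0) = 0.
Proof.
exists (upd (upd (init_mem e l) 2 40) 2 (40 - n)).
  by rewrite /entry /= /upd /= subn_eq0 leqNgt; case: (ltnP n 40).
split; first split.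
- by [].
- by [].
- move=> i j ji; have ne2 : (2 + i * n + j == 2) = false.
    by case/andP: ji => ji i_lt_n; apply/eqP; nia.
  by rewrite /upd ne2 init_mem_lower.
rewrite /offset /upd; case: (ltnP n 40) => [n_small | n_large] /=; last by lia.
by rewrite /init_mem /= ltnNge ifF //; apply/negbTE; nia.
Qed.

Lemma cat_layout (T : Type) (a b c : seq T) x : a ++ b ++ x :: c = (a ++ b ++ [:: x]) ++ c.
Proof. by rewrite -!catA. Qed.

Lemma size_layout (T : Type) (a b : seq T) x : size (a ++ b ++ [:: x]) = size a + size b + 1.
Proof. by rewrite !size_cat addnA. Qed.

Lemma size_prog_prefix s :
  size ([:: IConst 2 40; ISub 2 2 0; IJz 2 (4 + csize (alg_cmd s 1600))] ++
        compile (reg 1600 0) 3 (alg_cmd s 1600) ++ [:: IHalt]) = 4 + csize (alg_cmd s 1600).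
Proof. by rewrite size_layout size_compile addn1. Qed.

Lemma prog_code s n :
  code_at (prog s) (entry s n) (compile (reg (offset n) 0) (entry s n) (alg_cmd s (offset n))).
Proof.
rewrite /entry /offset; case: (ltnP n 40) => _.
  exists [:: IConst 2 40; ISub 2 2 0; IJz 2 (4 + csize (alg_cmd s 1600))].
  by exists (IHalt :: compile (reg 0 0) (4 + csize (alg_cmd s 1600)) (alg_cmd s 0)).
exists ([:: IConst 2 40; ISub 2 2 0; IJz 2 (4 + csize (alg_cmd s 1600))] ++
  compile (reg 1600 0) 3 (alg_cmd s 1600) ++ [:: IHalt]), [::].
by rewrite cats0 size_prog_prefix; split=> //; apply: cat_layout.
Qed.

Lemma prog_halt s n m : step (prog s) (entry s n + csize (alg_cmd s (offset n)), m) = None.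
Proof.
rewrite /entry /offset; case: (ltnP n 40) => _.
  rewrite (@step_code_at _ _ IHalt) //.
  exists ([:: IConst 2 40; ISub 2 2 0; IJz 2 (4 + csize (alg_cmd s 1600))] ++
    compile (reg 1600 0) 3 (alg_cmd s 1600)).
  exists (compile (reg 0 0) (4 + csize (alg_cmd s 1600)) (alg_cmd s 0)).
  split; first by rewrite /prog -catA.
  by rewrite (size_cat [:: _; _; _]) size_compile.
rewrite /step /prog cat_layout (size_cat (_ ++ _ ++ _)) size_prog_prefix size_compile.
by rewrite ltnn.
Qed.

Lemma alg_cmd_keeps_zero s R : reg R 0 \notin writes (alg_cmd s R).
Proof. by rewrite /alg_cmd /mem_cmd; case: (s == 2); rewrite /= !inE; lia. Qed.

Lemma input_size_bound n l : alg_cost n + 3 <= 200 * (input_size n l).+1 ^ 5.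
Proof.
have le_n : n.+1 ^ 5 <= (input_size n l).+1 ^ 5 by rewrite leq_exp2r // ltnS /input_size; nia.
have : 1 <= n.+1 ^ 5 by rewrite expn_gt0.
have := alg_cost_poly n; lia.
Qed.

Theorem mainTheorem2 (s : nat) (hs : 2 <= s) :
  exists (P : program) (c k : nat),
    forall (n : nat) (e : rel 'I_n) (l : nat),
      symmetric e -> irreflexive e -> indep_number_le2 e ->
      decides_within P (c * (input_size n l).+1 ^ k) (init_mem e l)
                     (sclub_yes e s l).
Proof.
exists (prog s), 200, 5 => n e l e_sym e_irr alpha2.
have [m prefix [input_m zero_m]] := prog_prefix s e l.
apply: (decides_within_runs prefix (prog_code s n) (prog_halt s n) (alg_cmd_keeps_zero s _) zero_m).
apply: runs_weaken (alg_cmd_correct hs e_sym e_irr alpha2 (@offset_clear n) zero_m input_m) _.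
move=> m' k _ [le_k yes]; split=> //.
by have := input_size_bound n l; lia.
Qed.
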